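(* For all $a,b>0$, $G(a,b)\le\lambda_s(a,b)\le L(a,b)$ whenever $-1/2\le s\le 0$. These bounds are best possible: the inequality $G(a,b)\le \lambda_s(a,b)$ holds for all $a,b>0$ if and only if $s\ge -1/2$, and the inequality $\lambda_s(a,b)\le L(a,b)$ holds for all $a,b>0$ if and only if $s\le 0$.
   Context: For $a,b>0$ with $a\neq b$ define $$\lambda_s(a,b)=\begin{cases}\dfrac{s-1}{s+1}\cdot\dfrac{a^{s+1}+b^{s+1}-2\left(\frac{a+b}{2}\right)^{s+1}}{a^s+b^s-2\left(\frac{a+b}{2}\right)^s}, & s\in\mathbb{R}\setminus\{-1,0,1\},\\[3mm] \dfrac{2\log\frac{a+b}{2}-\log a-\log b}{\frac{1}{2a}+\frac{1}{2b}-\frac{2}{a+b}}, & s=-1,\\[3mm] \dfrac{a\log a+b\log b-(a+b)\log\frac{a+b}{2}}{2\log\frac{a+b}{2}-\log a-\log b}, & s=0,\\[3mm] \dfrac{(b-a)^2}{4\left(a\log a+b\log b-(a+b)\log\frac{a+b}{2}\right)}, & s=1,\end{cases}$$ and $\lambda_s(a,a)=a$. The geometric mean is $G(a,b)=\sqrt{ab}$ and the logarithmic mean is $L(a,b)=\frac{b-a}{\log b-\log a}$ for $a\ne b$, $L(a,a)=a$. *)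

From Stdlib Require Import Reals Lra.
Open Scope R_scope.

Definition Amean (a b : R) : R := (a + b) / 2.

Definition Gmean (a b : R) : R := sqrt (a * b).

Definition Lmean (a b : R) : R :=
  if Req_EM_T a b then a else (b - a) / (ln b - ln a).

Definition lambda (s a b : R) : R :=
  if Req_EM_T a b then a
  else if Req_EM_T s (-1) then
    (2 * ln (Amean a b) - ln a - ln b) /
    (1 / (2 * a) + 1 / (2 * b) - 2 / (a + b))
  else if Req_EM_T s 0 then
    (a * ln a + b * ln b - (a + b) * ln (Amean a b)) /
    (2 * ln (Amean a b) - ln a - ln b)
  else if Req_EM_T s 1 then
    (b - a) ^ 2 / (4 * (a * ln a + b * ln b - (a + b) * ln (Amean a b)))
  else
    (s - 1) / (s + 1) *
    ((Rpower a (s + 1) + Rpower b (s + 1) - 2 * Rpower (Amean a b) (s + 1)) /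
     (Rpower a s + Rpower b s - 2 * Rpower (Amean a b) s)).

From Stdlib Require Import Reals Lra Psatz.
From Coquelicot Require Import Coquelicot.
Open Scope R_scope.

(* The proof rests on an integral representation.  Let m = (a+b)/2 and let
   T(x) = min(x-a, b-x) be the tent kernel on [a,b].  For every real t the
   moment
       M_t(a,b) = int_a^b T(x) x^t dx = Q_t(a) + Q_t(b) - 2 Q_t(m)
   is positive, where Q_t ([prim2 t]) is a second primitive of x^t, and
   for a < b
       lambda_s(a,b) = M_(s-1)(a,b) / M_(s-2)(a,b);
   the four cases in the definition of lambda_s are exactly the cases of
   Q_t (t = -1, t = -2, generic).  Since (x - c)(x^r - c^r) >= 0 for r >= 0,
   comparing integrands shows that lambda_s(a,b) is nondecreasing in s.
   The theorem then reduces to the two endpoint inequalities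
   G <= lambda_(-1/2) (an algebraic inequality between square roots) and
   lambda_0 <= L (after a = F e^-v, b = F e^v, a hyperbolic inequality
   resting on sinh^3 v >= v^3 cosh v), and to explicit witnesses a -> 0,
   b = 1, showing that lambda_s drops below G when s < -1/2 and rises
   above L when s > 0. *)

Lemma Rpower_pos (x t : R) : 0 < Rpower x t.
Proof. apply exp_pos. Qed.

Lemma Rpower_succ (x t : R) : 0 < x -> Rpower x (t + 1) = Rpower x t * x.
Proof. intros Hx. rewrite Rpower_plus, Rpower_1 by exact Hx. reflexivity. Qed.

Lemma Rpower_one_base (t : R) : Rpower 1 t = 1.
Proof. unfold Rpower. rewrite ln_1, Rmult_0_r. apply exp_0. Qed.

Lemma Rpower_m1 (x : R) : 0 < x -> Rpower x (-1) = / x.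
Proof. intros Hx. replace (-1) with (Ropp 1) by ring. rewrite Rpower_Ropp, Rpower_1; auto. Qed.

Lemma Rle_Rpower_l_neg (x y t : R) : t <= 0 -> 0 < x <= y -> Rpower y t <= Rpower x t.
Proof.
  intros Ht Hxy.
  replace t with (- - t) by ring. rewrite (Rpower_Ropp y (- t)), (Rpower_Ropp x (- t)).
  apply Rinv_le_contravar; [apply Rpower_pos|].
  apply Rle_Rpower_l; lra.
Qed.

Lemma Rpower_cross_sign (x c r : R) :
  0 < x -> 0 < c -> 0 <= r -> 0 <= (x - c) * (Rpower x r - Rpower c r).
Proof.
  intros Hx Hc Hr. destruct (Rle_dec c x).
  - assert (Rpower c r <= Rpower x r) by (apply Rle_Rpower_l; lra). nra.
  - assert (Rpower x r <= Rpower c r) by (apply Rle_Rpower_l; lra). nra.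
Qed.

Definition prim2 (t x : R) : R :=
  if Req_EM_T t (-1) then x * ln x
  else if Req_EM_T t (-2) then - ln x
  else Rpower x (t + 2) / ((t + 1) * (t + 2)).

Definition prim1 (t x : R) : R :=
  if Req_EM_T t (-1) then ln x + 1
  else if Req_EM_T t (-2) then - / x
  else Rpower x (t + 1) / (t + 1).

Lemma prim2_derive (t x : R) : 0 < x -> is_derive (prim2 t) x (prim1 t x).
Proof.
  intros Hx. unfold prim2, prim1.
  destruct (Req_EM_T t (-1)); [|destruct (Req_EM_T t (-2))].
  - auto_derive; [lra | field; lra].
  - auto_derive; [lra | field; lra].
  - unfold Rpower. auto_derive; [lra|].
    rewrite <- !(Rmult_comm (ln x)).
    replace (ln x * (t + 2)) with (ln x * (t + 1) + ln x) by ring.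
    rewrite exp_plus, exp_ln by exact Hx. field. lra.
Qed.

Lemma prim1_derive (t x : R) : 0 < x -> is_derive (prim1 t) x (Rpower x t).
Proof.
  intros Hx. unfold prim1.
  destruct (Req_EM_T t (-1)); [|destruct (Req_EM_T t (-2))]; subst.
  - rewrite Rpower_m1 by exact Hx.
    auto_derive; [lra | field; lra].
  - replace (Rpower x (-2)) with (/ (x * x))
      by (replace (-2) with (Ropp (1 + 1)) by ring;
          rewrite Rpower_Ropp, Rpower_plus, Rpower_1; auto).
    auto_derive; [lra | field; lra].
  - unfold Rpower. auto_derive; [lra|].
    rewrite <- !(Rmult_comm (ln x)).
    replace (ln x * (t + 1)) with (ln x * t + ln x) by ring.
    rewrite exp_plus, exp_ln by exact Hx. field. lra.
Qed.

Lemma weighted_power_RInt (al be u v t : R) : 0 < u <= v ->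
  is_RInt (fun x => (al * x + be) * Rpower x t) u v
    (((al * v + be) * prim1 t v - al * prim2 t v)
     - ((al * u + be) * prim1 t u - al * prim2 t u)).
Proof.
  intros Huv.
  assert (Hpos : forall x, Rmin u v <= x <= Rmax u v -> 0 < x).
  { intros x Hx. rewrite Rmin_left in Hx; lra. }
  apply (is_RInt_derive (fun x => (al * x + be) * prim1 t x - al * prim2 t x)).
  - intros x Hx. specialize (Hpos x Hx).
    assert (Hlin : is_derive (fun y => al * y + be) x al) by (auto_derive; [exact I | ring]).
    assert (Hd := is_derive_minus _ _ x _ _
      (is_derive_mult _ _ x _ _ Hlin (prim1_derive t x Hpos) Rmult_comm)
      (is_derive_scal _ x al _ (prim2_derive t x Hpos))).
    unfold plus, minus, opp, mult, scal in Hd; simpl in Hd.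
    replace ((al * x + be) * Rpower x t)
      with (al * prim1 t x + (al * x + be) * Rpower x t + - (al * prim1 t x)) by ring.
    exact Hd.
  - intros x Hx. specialize (Hpos x Hx).
    apply (ex_derive_continuous (fun y => (al * y + be) * Rpower y t)).
    unfold Rpower. auto_derive. exact Hpos.
Qed.

Definition tent (a b x : R) : R := Rmin (x - a) (b - x).

Definition moment (a b t : R) : R := prim2 t a + prim2 t b - 2 * prim2 t ((a + b) / 2).

(* [moment a b t] is the integral of [tent a b x * x^t] over [a,b]:
   integrate each linear half of the tent separately. *)
Lemma moment_RInt (a b t : R) : 0 < a < b ->
  is_RInt (fun x => tent a b x * Rpower x t) a b (moment a b t).
Proof.
  intros Hab. set (m := (a + b) / 2).
  assert (Hleft := weighted_power_RInt 1 (- a) a m t ltac:(unfold m; lra)).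
  assert (Hright := weighted_power_RInt (-1) b m b t ltac:(unfold m; lra)).
  apply (is_RInt_ext _ (fun x => tent a b x * Rpower x t)) in Hleft, Hright;
    try (intros x Hx; unfold tent;
         rewrite Rmin_left, Rmax_right in Hx by (unfold m; lra);
         f_equal; unfold m in Hx;
         first [rewrite Rmin_left by lra | rewrite Rmin_right by lra]; ring).
  replace (moment a b t) with (plus
    ((1 * m + - a) * prim1 t m - 1 * prim2 t m - ((1 * a + - a) * prim1 t a - 1 * prim2 t a))
    ((-1 * b + b) * prim1 t b - -1 * prim2 t b - ((-1 * m + b) * prim1 t m - -1 * prim2 t m))).
  - exact (is_RInt_Chasles _ _ _ _ _ _ Hleft Hright).
  - unfold moment, m, plus; simpl. field.
Qed.

Lemma moment_generic (a b t : R) : t <> -1 -> t <> -2 ->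
  moment a b t = (Rpower a (t + 2) + Rpower b (t + 2)
                  - 2 * Rpower ((a + b) / 2) (t + 2)) / ((t + 1) * (t + 2)).
Proof.
  intros H1 H2. unfold moment, prim2.
  destruct (Req_EM_T t (-1)); [contradiction|].
  destruct (Req_EM_T t (-2)); [contradiction|].
  field. split; lra.
Qed.

Lemma moment_m1 (a b : R) :
  moment a b (-1) = a * ln a + b * ln b - (a + b) * ln ((a + b) / 2).
Proof. unfold moment, prim2. destruct (Req_EM_T (-1) (-1)); [field | lra]. Qed.

Lemma moment_m2 (a b : R) :
  moment a b (-2) = 2 * ln ((a + b) / 2) - ln a - ln b.
Proof.
  unfold moment, prim2.
  destruct (Req_EM_T (-2) (-1)); [lra|]. destruct (Req_EM_T (-2) (-2)); [ring | lra].
Qed.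

Lemma moment_0 (a b : R) : 0 < a < b -> moment a b 0 = (b - a) ^ 2 / 4.
Proof.
  intros Hab. rewrite moment_generic by lra.
  replace (0 + 2) with (0 + 1 + 1) by ring.
  rewrite !Rpower_succ, !Rpower_O by lra. field.
Qed.

(* The integrand is at least [min(a^t, b^t) tent(x)], whose integral is
   [min(a^t, b^t) (b-a)^2/4 > 0]. *)
Lemma moment_pos (a b t : R) : 0 < a < b -> 0 < moment a b t.
Proof.
  intros Hab. set (k := Rmin (Rpower a t) (Rpower b t)).
  assert (Hk : 0 < k) by (unfold k; apply Rmin_case; apply Rpower_pos).
  assert (Hlow : k * moment a b 0 <= moment a b t).
  { apply (is_RInt_le (fun x => k * (tent a b x * Rpower x 0))
      (fun x => tent a b x * Rpower x t) a b); [lra | | apply moment_RInt; lra |].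
    - exact (is_RInt_scal _ _ _ k _ (moment_RInt a b 0 Hab)).
    - intros x Hx. rewrite Rpower_O by lra.
      assert (0 <= tent a b x) by (unfold tent; apply Rmin_case; lra).
      assert (k <= Rpower x t).
      { unfold k. destruct (Rle_dec 0 t).
        - apply Rle_trans with (Rpower a t); [apply Rmin_l | apply Rle_Rpower_l; lra].
        - apply Rle_trans with (Rpower b t);
            [apply Rmin_r | apply Rle_Rpower_l_neg; lra]. }
      nra. }
  rewrite moment_0 in Hlow by lra.
  assert (0 < (b - a) ^ 2 / 4) by (apply Rdiv_lt_0_compat; [apply pow_lt|]; lra).
  nra.
Qed.

Lemma lambda_moment_ratio (s a b : R) : 0 < a < b ->
  lambda s a b = moment a b (s - 1) / moment a b (s - 2).
Proof.
  intros Hab.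
  assert (Hpos1 := moment_pos a b (s - 1) Hab).
  assert (Hpos2 := moment_pos a b (s - 2) Hab).
  unfold lambda, Amean.
  destruct (Req_EM_T a b); [lra|].
  destruct (Req_EM_T s (-1)); [|destruct (Req_EM_T s 0); [|destruct (Req_EM_T s 1)]];
    try subst s.
  - replace (-1 - 1) with (-2) by ring. rewrite moment_m2.
    rewrite moment_generic in * by lra.
    replace (-1 - 2 + 2) with (-1) in * by ring.
    rewrite !Rpower_m1 in * by lra.
    assert (/ a + / b - 2 * / ((a + b) / 2) <> 0).
    { intro Hz. rewrite Hz in Hpos2. unfold Rdiv in Hpos2. lra. }
    assert (0 < (b - a) * (b - a)) by nra.
    field. repeat split; nra.
  - replace (0 - 1) with (-1) by ring. replace (0 - 2) with (-2) by ring.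
    rewrite moment_m1, moment_m2. reflexivity.
  - replace (1 - 1) with 0 by ring. replace (1 - 2) with (-1) in * by ring.
    rewrite moment_0 by lra. rewrite moment_m1 in *. field. lra.
  - rewrite (moment_generic a b (s - 1)) in * by lra.
    rewrite (moment_generic a b (s - 2)) in * by lra.
    replace (s - 1 + 2) with (s + 1) in * by ring.
    replace (s - 2 + 2) with s in * by ring.
    replace (s - 1 + 1) with s in * by ring.
    replace (s - 2 + 1) with (s - 1) in * by ring.
    assert (Rpower a s + Rpower b s - 2 * Rpower ((a + b) / 2) s <> 0).
    { intro Hz. rewrite Hz in Hpos2. unfold Rdiv in Hpos2. lra. }
    field. repeat split; lra.
Qed.

(* Pointwise form of the comparison:
   [x^(u+1) - c x^u - c^(u-t) (x^(t+1) - c x^t) = x^t (x-c) (x^(u-t) - c^(u-t))]. *)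
Lemma power_comparison (x c t u : R) : 0 < x -> 0 < c -> t <= u ->
  Rpower c (u - t) * (Rpower x (t + 1) - c * Rpower x t)
  <= Rpower x (u + 1) - c * Rpower x u.
Proof.
  intros Hx Hc Htu.
  assert (Hu : Rpower x u = Rpower x t * Rpower x (u - t))
    by (rewrite <- Rpower_plus; f_equal; ring).
  rewrite !Rpower_succ, Hu by exact Hx.
  assert (Hsign := Rpower_cross_sign x c (u - t) Hx Hc ltac:(lra)).
  assert (Ht := Rpower_pos x t).
  assert (0 <= Rpower x t * ((x - c) * (Rpower x (u - t) - Rpower c (u - t))))
    by (apply Rmult_le_pos; lra).
  nra.
Qed.

(* With [c = lambda_s0], integrating [power_comparison] against the tent gives
   [M_(s-1) - c M_(s-2) >= c^(s-s0) (M_(s0-1) - c M_(s0-2)) = 0]. *)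
Lemma lambda_monotone_ordered (s0 s a b : R) : 0 < a < b -> s0 <= s ->
  lambda s0 a b <= lambda s a b.
Proof.
  intros Hab Hs. rewrite !lambda_moment_ratio by exact Hab.
  set (c := moment a b (s0 - 1) / moment a b (s0 - 2)).
  assert (H1 := moment_pos a b (s0 - 1) Hab).
  assert (H2 := moment_pos a b (s0 - 2) Hab).
  assert (H3 := moment_pos a b (s - 2) Hab).
  assert (Hc : 0 < c) by (apply Rdiv_lt_0_compat; lra).
  assert (Hint : Rpower c (s - s0) * (moment a b (s0 - 1) - c * moment a b (s0 - 2))
                 <= moment a b (s - 1) - c * moment a b (s - 2)).
  { apply (is_RInt_le
      (fun x => Rpower c (s - s0) * (tent a b x * Rpower x (s0 - 1)
                                     - c * (tent a b x * Rpower x (s0 - 2))))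
      (fun x => tent a b x * Rpower x (s - 1) - c * (tent a b x * Rpower x (s - 2)))
      a b); [lra| | |].
    - exact (is_RInt_scal _ _ _ _ _ (is_RInt_minus _ _ _ _ _ _
        (moment_RInt a b (s0 - 1) Hab)
        (is_RInt_scal _ _ _ c _ (moment_RInt a b (s0 - 2) Hab)))).
    - exact (is_RInt_minus _ _ _ _ _ _ (moment_RInt a b (s - 1) Hab)
        (is_RInt_scal _ _ _ c _ (moment_RInt a b (s - 2) Hab))).
    - intros x Hx.
      assert (Htent : 0 <= tent a b x) by (unfold tent; apply Rmin_case; lra).
      assert (Hcmp := power_comparison x c (s0 - 2) (s - 2) ltac:(lra) Hc ltac:(lra)).
      replace (s0 - 2 + 1) with (s0 - 1) in Hcmp by ring.
      replace (s - 2 + 1) with (s - 1) in Hcmp by ring.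
      replace (s - 2 - (s0 - 2)) with (s - s0) in Hcmp by ring.
      apply (Rmult_le_compat_l _ _ _ Htent) in Hcmp. nra. }
  replace (moment a b (s0 - 1) - c * moment a b (s0 - 2)) with 0 in Hint
    by (unfold c; field; lra).
  apply (Rle_div_r c); [exact H3 | lra].
Qed.

Lemma positive_pairs_wlog (Rel : R -> R -> Prop) :
  (forall a b, 0 < a -> 0 < b -> Rel a b -> Rel b a) ->
  (forall a, 0 < a -> Rel a a) ->
  (forall a b, 0 < a < b -> Rel a b) ->
  forall a b, 0 < a -> 0 < b -> Rel a b.
Proof.
  intros Hsym Hdiag Hlt a b Ha Hb.
  destruct (Rtotal_order a b) as [H|[H|H]].
  - apply Hlt; lra.
  - subst; apply Hdiag; exact Hb.
  - apply Hsym, Hlt; lra.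
Qed.

Lemma lambda_sym (s a b : R) : lambda s a b = lambda s b a.
Proof.
  unfold lambda, Amean. replace (b + a) with (a + b) by ring.
  destruct (Req_EM_T a b); destruct (Req_EM_T b a); try lra.
  destruct (Req_EM_T s (-1)); [f_equal; lra|].
  destruct (Req_EM_T s 0); [f_equal; lra|].
  destruct (Req_EM_T s 1); [f_equal; [ring | lra]|].
  f_equal. f_equal; lra.
Qed.

Lemma lambda_diag (s a : R) : lambda s a a = a.
Proof. unfold lambda. destruct (Req_EM_T a a); [reflexivity | lra]. Qed.

Lemma lambda_monotone (s0 s a b : R) : 0 < a -> 0 < b -> s0 <= s ->
  lambda s0 a b <= lambda s a b.
Proof.
  intros Ha Hb Hs. revert a b Ha Hb.
  apply positive_pairs_wlog.
  - intros a b _ _. rewrite !(lambda_sym _ a b). auto.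
  - intros a _. rewrite !lambda_diag. lra.
  - intros a b Hab. apply lambda_monotone_ordered; assumption.
Qed.

(* With [X = sqrt a], [Y = sqrt b], [Q = sqrt m]: the square of the right side
   exceeds that of the left one by [(Q^2 - XY)^2]. *)
Lemma quadratic_mean_bound (X Y Q : R) : 0 < X -> 0 < Y -> 0 < Q ->
  2 * (Q * Q) = X * X + Y * Y -> 2 * Q * (X + Y) <= 3 * (Q * Q) + X * Y.
Proof.
  intros HX HY HQ HQXY.
  assert (Hdiff : (3 * (Q * Q) + X * Y) ^ 2 - (2 * Q * (X + Y)) ^ 2
                  = (Q * Q - X * Y) ^ 2).
  { replace ((2 * Q * (X + Y)) ^ 2) with (4 * (Q * Q) * (X + Y) ^ 2) by ring.
    replace (Q * Q) with ((X * X + Y * Y) / 2) by lra. field. }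
  assert (0 <= (Q * Q - X * Y) ^ 2) by apply pow2_ge_0.
  apply Rsqr_incr_0_var; [unfold Rsqr; nra | nra].
Qed.

Lemma Rpower_half (x : R) : 0 < x -> Rpower x (1 / 2) = sqrt x.
Proof. intros Hx. rewrite <- Rpower_sqrt by exact Hx. f_equal. field. Qed.

Lemma Rpower_neg_half (x : R) : 0 < x -> Rpower x (-1 / 2) = / sqrt x.
Proof.
  intros Hx. replace (-1 / 2) with (- (1 / 2)) by field.
  rewrite Rpower_Ropp, Rpower_half by exact Hx. reflexivity.
Qed.

(* [M_(-3/2) - sqrt(ab) M_(-5/2) = 8/(3Q) (3Q^2 + XY - 2Q(X+Y)) >= 0]. *)
Lemma Gmean_le_lambda_half_ordered (a b : R) : 0 < a < b ->
  Gmean a b <= lambda (-1/2) a b.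
Proof.
  intros Hab. rewrite lambda_moment_ratio by exact Hab.
  assert (H2 := moment_pos a b (-1/2 - 2) Hab).
  rewrite !moment_generic in * by lra.
  replace (-1/2 - 1 + 2) with (1/2) by field.
  replace (-1/2 - 2 + 2) with (-1/2) in * by field.
  rewrite !Rpower_half by lra. rewrite !Rpower_neg_half in * by lra.
  unfold Gmean. rewrite sqrt_mult by lra.
  assert (HX := sqrt_lt_R0 a ltac:(lra)). assert (HY := sqrt_lt_R0 b ltac:(lra)).
  assert (HQ := sqrt_lt_R0 ((a + b) / 2) ltac:(lra)).
  assert (Ha2 := sqrt_sqrt a ltac:(lra)). assert (Hb2 := sqrt_sqrt b ltac:(lra)).
  assert (Hm2 := sqrt_sqrt ((a + b) / 2) ltac:(lra)).
  set (X := sqrt a) in *. set (Y := sqrt b) in *. set (Q := sqrt ((a + b) / 2)) in *.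
  assert (Hbound := quadratic_mean_bound X Y Q HX HY HQ ltac:(lra)).
  match goal with |- _ <= ?n / ?d => apply (Rle_div_r _ n d H2) end.
  match goal with |- ?l <= ?r =>
    assert (Egap : r - l = 8 / (3 * Q) * (3 * (Q * Q) + X * Y - 2 * Q * (X + Y)))
  end.
  { clear Hbound H2. clearbody X Y Q. field. lra. }
  assert (0 <= 8 / (3 * Q) * (3 * (Q * Q) + X * Y - 2 * Q * (X + Y)))
    by (apply Rmult_le_pos; [apply Rlt_le, Rdiv_lt_0_compat|]; lra).
  lra.
Qed.

Lemma Gmean_sym (a b : R) : Gmean a b = Gmean b a.
Proof. unfold Gmean. rewrite Rmult_comm. reflexivity. Qed.

Lemma Gmean_le_lambda_half (a b : R) : 0 < a -> 0 < b -> Gmean a b <= lambda (-1/2) a b.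
Proof.
  revert a b. apply positive_pairs_wlog.
  - intros a b _ _. rewrite Gmean_sym, lambda_sym. auto.
  - intros a Ha. unfold Gmean. rewrite lambda_diag, sqrt_square; lra.
  - exact Gmean_le_lambda_half_ordered.
Qed.

Lemma nondecreasing_of_derive (f df : R -> R) (u v : R) : u <= v ->
  (forall x, u <= x <= v -> is_derive f x (df x)) ->
  (forall x, u <= x <= v -> 0 <= df x) -> f u <= f v.
Proof.
  intros Huv Hd Hpos. destruct (Req_dec u v) as [<-|Hne]; [lra|].
  destruct (MVT_cor2 f df u v ltac:(lra)) as [c [Hc Hcuv]].
  - intros c Hc. apply is_derive_Reals, Hd, Hc.
  - assert (0 <= df c) by (apply Hpos; lra). nra.
Qed.

Lemma cosh_pos (x : R) : 0 < cosh x.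
Proof.
  unfold cosh. assert (0 < exp x) by apply exp_pos.
  assert (0 < exp (- x)) by apply exp_pos. lra.
Qed.

Lemma sinh_pos (x : R) : 0 < x -> 0 < sinh x.
Proof. intros Hx. rewrite <- sinh_0. apply sinh_lt, Hx. Qed.

Lemma cosh_sinh_sq (x : R) : cosh x * cosh x - sinh x * sinh x = 1.
Proof.
  unfold cosh, sinh. rewrite exp_Ropp.
  assert (0 < exp x) by apply exp_pos. field. lra.
Qed.

Lemma cube_root_inverse (c : R) : 0 < c ->
  Rpower c (1/3) ^ 3 = c /\ Rpower c (-1/3) = / Rpower c (1/3).
Proof.
  intros Hc. split.
  - rewrite <- Rpower_pow by apply Rpower_pos.
    rewrite Rpower_mult. replace (1/3 * INR 3) with 1 by (simpl; field).
    apply Rpower_1, Hc.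
  - rewrite <- Rpower_Ropp. f_equal. field.
Qed.

(* [sinh^3 x >= x^3 cosh x]: with [w = cosh(y)^(1/3)] the derivative of
   [sinh y / w - y] is [(w^2-1)^2 (2w^2+1) / (3w^4) >= 0]. *)
Lemma sinh_cube_ge (x : R) : 0 <= x -> x ^ 3 * cosh x <= sinh x ^ 3.
Proof.
  intros Hx.
  set (f := fun y => sinh y * Rpower (cosh y) (-1/3) - y).
  set (df := fun y => cosh y * Rpower (cosh y) (-1/3)
                      - 1/3 * sinh y * sinh y / cosh y * Rpower (cosh y) (-1/3) - 1).
  assert (Hf : f 0 <= f x).
  { apply (nondecreasing_of_derive f df); [exact Hx| |].
    - intros y _. assert (Hc := cosh_pos y). unfold f, df, Rpower.
      unfold cosh, sinh in *. auto_derive; [lra | unfold Rdiv; field; lra].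
    - intros y _. unfold df.
      destruct (cube_root_inverse (cosh y) (cosh_pos y)) as [Hw3 Hwinv].
      rewrite Hwinv. set (w := Rpower (cosh y) (1/3)) in *.
      assert (Hw : 0 < w) by apply Rpower_pos.
      assert (Hsh : sinh y * sinh y = w ^ 3 * w ^ 3 - 1)
        by (rewrite Hw3; pose proof (cosh_sinh_sq y); lra).
      rewrite <- Hw3.
      replace (1/3 * sinh y * sinh y) with (1/3 * (sinh y * sinh y)) by ring.
      rewrite Hsh.
      replace (w ^ 3 * / w - 1/3 * (w ^ 3 * w ^ 3 - 1) / w ^ 3 * / w - 1)
        with ((w * w - 1) ^ 2 * (2 * (w * w) + 1) / (3 * w ^ 4)) by (field; lra).
      apply Rmult_le_pos; [apply Rmult_le_pos; [apply pow2_ge_0 | nra]|].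
      apply Rlt_le, Rinv_0_lt_compat. apply Rmult_lt_0_compat; [lra | apply pow_lt, Hw]. }
  unfold f in Hf. rewrite sinh_0 in Hf.
  destruct (cube_root_inverse (cosh x) (cosh_pos x)) as [Hw3 Hwinv].
  rewrite Hwinv in Hf. set (w := Rpower (cosh x) (1/3)) in *.
  assert (Hw : 0 < w) by apply Rpower_pos.
  assert (Hxw : x * w <= sinh x).
  { apply (Rmult_le_reg_r (/ w)); [apply Rinv_0_lt_compat, Hw|].
    replace (x * w * / w) with x by (field; lra). lra. }
  rewrite <- Hw3.
  replace (x ^ 3 * w ^ 3) with ((x * w) ^ 3) by ring.
  apply pow_incr. split; [nra | exact Hxw].
Qed.

(* If [h] is nondecreasing on [(0,v]] and [h e >= -e^2], then [h v >= 0];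
   this replaces the continuity of [h] at [0]. *)
Lemma nonneg_of_squeeze (h : R -> R) (v : R) : 0 < v ->
  (forall e, 0 < e <= v -> h e <= h v) ->
  (forall e, 0 < e -> - (e * e) <= h e) -> 0 <= h v.
Proof.
  intros Hv Hmono Hlow. destruct (Rle_dec 0 (h v)) as [|Hneg]; [assumption|].
  set (e := Rmin v (Rmin 1 (- h v / 2))).
  assert (He : 0 < e) by (unfold e; repeat apply Rmin_case; lra).
  assert (He1 : e <= 1) by (unfold e; rewrite Rmin_r; apply Rmin_l).
  assert (Heh : e <= - h v / 2) by (unfold e; rewrite Rmin_r; apply Rmin_r).
  assert (Hev : e <= v) by apply Rmin_l.
  specialize (Hmono e (conj He Hev)). specialize (Hlow e He).
  nra.
Qed.

(* The difference between the two sides of [log_cosh_bound] below, divided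
   by [v cosh v + sinh v]. *)
Definition log_cosh_gap (x : R) : R :=
  ln (cosh x) - x * x * sinh x / (x * cosh x + sinh x).

Lemma log_cosh_gap_denominator_pos (x : R) : 0 < x -> 0 < x * cosh x + sinh x.
Proof. intros Hx. pose proof (cosh_pos x). pose proof (sinh_pos x Hx). nra. Qed.

Lemma log_cosh_gap_derive (x : R) : 0 < x ->
  is_derive log_cosh_gap x
    ((sinh x ^ 3 - x ^ 3 * cosh x) / (cosh x * (x * cosh x + sinh x) ^ 2)).
Proof.
  intros Hx. assert (Hc := cosh_pos x).
  assert (Hden := log_cosh_gap_denominator_pos x Hx).
  assert (HE : 0 < exp x) by apply exp_pos.
  assert (HD : 0 < x * (exp x * exp x + 1) + (exp x * exp x - 1)).
  { replace (x * (exp x * exp x + 1) + (exp x * exp x - 1))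
      with (2 * exp x * (x * cosh x + sinh x))
      by (unfold cosh, sinh; rewrite exp_Ropp; field; lra).
    apply Rmult_lt_0_compat; lra. }
  unfold log_cosh_gap, cosh, sinh in *.
  auto_derive; rewrite ?exp_Ropp in *; [repeat split; lra|].
  field. repeat split; nra.
Qed.

(* Near [0] the gap is at least [-e^2], because [ln cosh e >= 0]. *)
Lemma log_cosh_gap_lower (e : R) : 0 < e -> - (e * e) <= log_cosh_gap e.
Proof.
  intros He. unfold log_cosh_gap.
  assert (0 <= ln (cosh e)).
  { rewrite <- ln_1. apply ln_le; [lra|].
    pose proof (cosh_sinh_sq e). pose proof (cosh_pos e). nra. }
  assert (e * e * sinh e / (e * cosh e + sinh e) <= e * e).
  { apply Rle_div_l; [apply log_cosh_gap_denominator_pos, He|].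
    pose proof (cosh_pos e). pose proof (sinh_pos e He).
    assert (0 <= e * e * (e * cosh e)) by (apply Rmult_le_pos; nra). nra. }
  lra.
Qed.

(* [ln cosh v (sinh v + v cosh v) >= v^2 sinh v]: the gap is nondecreasing on
   [(0, v]] by [sinh_cube_ge], hence nonnegative by [nonneg_of_squeeze]. *)
Lemma log_cosh_bound (v : R) : 0 < v ->
  v * v * sinh v <= ln (cosh v) * (sinh v + v * cosh v).
Proof.
  intros Hv.
  assert (Hgap : 0 <= log_cosh_gap v).
  { apply nonneg_of_squeeze; [exact Hv | | exact log_cosh_gap_lower].
    intros e He.
    apply (nondecreasing_of_derive log_cosh_gap
      (fun x => (sinh x ^ 3 - x ^ 3 * cosh x) / (cosh x * (x * cosh x + sinh x) ^ 2)));
      [lra| |].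
    - intros x Hx. apply log_cosh_gap_derive. lra.
    - intros x Hx.
      assert (0 <= sinh x ^ 3 - x ^ 3 * cosh x) by (pose proof (sinh_cube_ge x); lra).
      apply Rle_mult_inv_pos; [assumption|].
      apply Rmult_lt_0_compat;
        [apply cosh_pos | apply pow_lt, log_cosh_gap_denominator_pos; lra]. }
  unfold log_cosh_gap in Hgap.
  assert (Hfrac : v * v * sinh v / (v * cosh v + sinh v) <= ln (cosh v)) by lra.
  apply Rle_div_l in Hfrac; [lra | apply log_cosh_gap_denominator_pos, Hv].
Qed.

(* With [a = F e^-v], [b = F e^v]:
   [L M_(-2) - M_(-1) = (2F/v) (ln(cosh v) (sinh v + v cosh v) - v^2 sinh v)]. *)
Lemma lambda0_le_Lmean_ordered (a b : R) : 0 < a < b -> lambda 0 a b <= Lmean a b.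
Proof.
  intros Hab. rewrite lambda_moment_ratio by exact Hab.
  assert (H2 := moment_pos a b (0 - 2) Hab).
  replace (0 - 1) with (-1) by ring. replace (0 - 2) with (-2) in * by ring.
  rewrite moment_m1. rewrite moment_m2 in *.
  unfold Lmean. destruct (Req_EM_T a b); [lra|].
  assert (Hln : ln a < ln b) by (apply ln_increasing; lra).
  set (v := (ln b - ln a) / 2). set (F := exp ((ln a + ln b) / 2)).
  assert (Hv : 0 < v) by (unfold v; lra).
  assert (HF : 0 < F) by apply exp_pos.
  assert (Ea : a = F * exp (- v)).
  { unfold F. rewrite <- exp_plus, <- (exp_ln a) at 1 by lra. f_equal. unfold v. field. }
  assert (Eb : b = F * exp v).
  { unfold F. rewrite <- exp_plus, <- (exp_ln b) at 1 by lra. f_equal. unfold v. field. }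
  assert (Elnm : ln ((a + b) / 2) = (ln a + ln b) / 2 + ln (cosh v)).
  { replace ((a + b) / 2) with (F * cosh v) by (unfold cosh; rewrite Ea, Eb at 1; field).
    rewrite ln_mult by (apply exp_pos || apply cosh_pos).
    unfold F. rewrite ln_exp. reflexivity. }
  assert (Esub : b - a = 2 * F * sinh v) by (unfold sinh; rewrite Ea, Eb at 1; field).
  assert (Eadd : a + b = 2 * F * cosh v) by (unfold cosh; rewrite Ea, Eb at 1; field).
  replace (ln b - ln a) with (2 * v) by (unfold v; field).
  rewrite Elnm in *.
  replace (2 * ((ln a + ln b) / 2 + ln (cosh v)) - ln a - ln b) with (2 * ln (cosh v)) in *
    by field.
  replace (a * ln a + b * ln b - (a + b) * ((ln a + ln b) / 2 + ln (cosh v)))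
    with (v * (b - a) - (a + b) * ln (cosh v)) by (unfold v; field).
  rewrite Esub, Eadd.
  apply Rle_div_l; [lra|].
  assert (Hbound := log_cosh_bound v Hv).
  match goal with |- ?l <= ?r =>
    assert (Egap : r - l = 2 * F / v * (ln (cosh v) * (sinh v + v * cosh v) - v * v * sinh v))
      by (field; lra) end.
  assert (0 < 2 * F / v) by (apply Rdiv_lt_0_compat; lra).
  nra.
Qed.

Lemma Lmean_sym (a b : R) : 0 < a -> 0 < b -> Lmean a b = Lmean b a.
Proof.
  intros Ha Hb. unfold Lmean.
  destruct (Req_EM_T a b); destruct (Req_EM_T b a); try lra.
  assert (ln a <> ln b) by (intro E; apply ln_inv in E; lra).
  field. lra.
Qed.

Lemma lambda0_le_Lmean (a b : R) : 0 < a -> 0 < b -> lambda 0 a b <= Lmean a b.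
Proof.
  revert a b. apply positive_pairs_wlog.
  - intros a b Ha Hb. rewrite Lmean_sym, lambda_sym by assumption. auto.
  - intros a _. unfold Lmean. rewrite lambda_diag.
    destruct (Req_EM_T a a); [lra | contradiction].
  - exact lambda0_le_Lmean_ordered.
Qed.

Lemma lambda_generic (s a b : R) : a <> b -> s <> -1 -> s <> 0 -> s <> 1 ->
  lambda s a b = (s - 1) / (s + 1) *
    ((Rpower a (s + 1) + Rpower b (s + 1) - 2 * Rpower ((a + b) / 2) (s + 1)) /
     (Rpower a s + Rpower b s - 2 * Rpower ((a + b) / 2) s)).
Proof.
  intros Hab H1 H2 H3. unfold lambda, Amean.
  destruct (Req_EM_T a b); [contradiction|].
  destruct (Req_EM_T s (-1)); [contradiction|].
  destruct (Req_EM_T s 0); [contradiction|].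
  destruct (Req_EM_T s 1); [contradiction | reflexivity].
Qed.

(* [e^y >= (1 + y/2)^2 >= y^2/4] for [y >= 0]. *)
Lemma exp_ge_quarter_square (y : R) : 0 <= y -> y * y / 4 <= exp y.
Proof.
  intros Hy. replace y with (y / 2 + y / 2) at 3 by field. rewrite exp_plus.
  assert (H := exp_ineq1_le (y / 2)). nra.
Qed.

Lemma Rpower_half_base_le_2 (s : R) : -1 < s <= 0 -> Rpower (1 / 2) s <= 2.
Proof.
  intros Hs. unfold Rpower.
  rewrite <- (exp_ln 2) at 2 by lra.
  replace (1 / 2) with (/ 2) by field. rewrite ln_Rinv by lra.
  assert (0 < ln 2) by (rewrite <- ln_1; apply ln_increasing; lra).
  apply Rlt_le, exp_increasing. nra.
Qed.

Lemma lambda_upper_near_zero (s a : R) : -1 < s < 0 -> 0 < a < 1 -> 6 <= Rpower a s ->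
  lambda s a 1 <= 2 * ((1 - s) * - ln a) / Rpower a s.
Proof.
  intros Hs Ha HP.
  rewrite lambda_generic by lra. rewrite !Rpower_one_base.
  assert (Hln : ln a < 0) by (rewrite <- ln_1; apply ln_increasing; lra).
  set (m := (a + 1) / 2).
  assert (HM1 : Rpower m (s + 1) <= 1).
  { rewrite <- (Rpower_one_base (s + 1)) at 2. apply Rle_Rpower_l; unfold m; lra. }
  assert (HM0 : Rpower m s <= 2).
  { apply Rle_trans with (Rpower (1 / 2) s);
      [apply Rle_Rpower_l_neg; unfold m; lra | apply Rpower_half_base_le_2; lra]. }
  assert (HPa : 1 + (s + 1) * ln a <= Rpower a (s + 1)) by apply exp_ineq1_le.
  set (T := (1 - s) * - ln a).
  assert (HT : 0 < T) by (unfold T; nra).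
  set (N0 := Rpower a s + 1 - 2 * Rpower m s).
  assert (HN0 : Rpower a s / 2 <= N0) by (unfold N0; lra).
  replace ((s - 1) / (s + 1) * ((Rpower a (s + 1) + 1 - 2 * Rpower m (s + 1)) / N0))
    with ((1 - s) * (2 * Rpower m (s + 1) - 1 - Rpower a (s + 1)) * / ((s + 1) * N0))
    by (field; lra).
  apply Rle_trans with (T / N0).
  - replace (T / N0) with ((s + 1) * T * / ((s + 1) * N0)) by (field; lra).
    apply Rmult_le_compat_r; [apply Rlt_le, Rinv_0_lt_compat; nra|].
    unfold T. nra.
  - replace (2 * T / Rpower a s) with (T / (Rpower a s / 2)) by (field; lra).
    apply Rmult_le_compat_l; [lra|].
    apply Rinv_le_contravar; lra.
Qed.

(* For [-1 < s < -1/2], [a = e^(-2X)] with [X] large: the bound above is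
   [4(1-s) X e^(2sX) < e^(-X) = G(a,1)]. *)
Lemma lambda_below_Gmean (s : R) : -1 < s < -1/2 ->
  exists a, 0 < a < 1 /\ lambda s a 1 < Gmean a 1.
Proof.
  intros Hs. set (d := - s - 1/2).
  assert (Hd : 0 < d) by (unfold d; lra).
  set (X := 5 + 9 / (d * d)).
  assert (HdX : 9 <= d * d * X).
  { unfold X. replace (d * d * (5 + 9 / (d * d))) with (5 * (d * d) + 9) by (field; lra).
    nra. }
  assert (HX : 5 <= X).
  { unfold X. assert (0 < 9 / (d * d)) by (apply Rdiv_lt_0_compat; nra). lra. }
  exists (exp (-2 * X)).
  assert (Ha : 0 < exp (-2 * X) < 1)
    by (split; [apply exp_pos | rewrite <- exp_0; apply exp_increasing; lra]).
  split; [exact Ha|].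
  assert (HG : Gmean (exp (-2 * X)) 1 = exp (- X)).
  { unfold Gmean. rewrite Rmult_1_r. replace (-2 * X) with (- X + - X) by ring.
    rewrite exp_plus. apply sqrt_square, Rlt_le, exp_pos. }
  assert (HP : Rpower (exp (-2 * X)) s = exp (X + 2 * d * X)).
  { unfold Rpower. rewrite ln_exp. f_equal. unfold d. field. }
  assert (HP6 : 6 <= Rpower (exp (-2 * X)) s).
  { rewrite HP. assert (H1 := exp_ineq1_le (X + 2 * d * X)). nra. }
  rewrite HG.
  eapply Rle_lt_trans; [apply lambda_upper_near_zero; lra|].
  rewrite ln_exp, HP.
  apply Rlt_div_l; [apply exp_pos|].
  rewrite <- exp_plus. replace (- X + (X + 2 * d * X)) with (2 * d * X) by ring.
  assert (Hexp := exp_ge_quarter_square (2 * d * X) ltac:(nra)).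
  nra.
Qed.

Lemma Rpower_half_base_lt_1 (s : R) : 0 < s -> Rpower (1 / 2) s < 1.
Proof.
  intros Hs. rewrite <- (Rpower_one_base s) at 2. apply Rlt_Rpower_l; lra.
Qed.

(* Concavity of [x^s] for [0 < s < 1]: [a^s + 1 < 2 ((a+1)/2)^s], read off
   from the positivity of [M_(s-2)(a,1)]. *)
Lemma power_midpoint_concave (s a : R) : 0 < s < 1 -> 0 < a < 1 ->
  Rpower a s + 1 - 2 * Rpower ((a + 1) / 2) s < 0.
Proof.
  intros Hs Ha.
  assert (Hpos := moment_pos a 1 (s - 2) Ha).
  rewrite moment_generic in Hpos by lra.
  replace (s - 2 + 2) with s in Hpos by ring.
  replace (s - 2 + 1) with (s - 1) in Hpos by ring.
  rewrite Rpower_one_base in Hpos.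
  set (N0 := Rpower a s + 1 - 2 * Rpower ((a + 1) / 2) s) in *.
  destruct (Rlt_dec N0 0) as [|Hge]; [assumption|].
  assert (0 <= N0 * / ((s - 1) * s * -1)) by (apply Rle_mult_inv_pos; nra).
  replace (N0 / ((s - 1) * s)) with (- (N0 * / ((s - 1) * s * -1))) in Hpos
    by (field; nra).
  lra.
Qed.

(* For small [a] the numerator of [lambda_s(a,1)] stays away from [0]; here
   [q = 2^(-s)] and [((a+1)/2)^(s+1) <= (1+a)^2 q / 2]. *)
Lemma power_midpoint_gap (s a : R) : 0 < s < 1 ->
  0 < a <= (1 - Rpower (1 / 2) s) / 6 ->
  (1 - Rpower (1 / 2) s) / 2 <= Rpower a (s + 1) + 1 - 2 * Rpower ((a + 1) / 2) (s + 1).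
Proof.
  intros Hs Ha. set (q := Rpower (1 / 2) s) in *.
  assert (Hq1 : q < 1) by apply Rpower_half_base_lt_1, Hs.
  assert (Hq0 : 0 < q) by apply Rpower_pos.
  set (m := (a + 1) / 2).
  assert (HmQ : Rpower m s <= (1 + a) * q).
  { replace m with ((1 + a) * (1 / 2)) by (unfold m; field).
    rewrite <- Rpower_mult_distr by lra. fold q.
    apply Rmult_le_compat_r; [lra|].
    rewrite <- (Rpower_1 (1 + a)) at 2 by lra.
    apply Rle_Rpower; lra. }
  rewrite (Rpower_succ m s) by (unfold m; lra).
  assert (HPa := Rpower_pos a (s + 1)).
  assert (Rpower m s * m <= (1 + a) * q * m)
    by (apply Rmult_le_compat_r; [unfold m; lra | exact HmQ]).
  assert (Hsq : (1 + a) * q * (1 + a) <= q + 3 * a).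
  { assert (a * ((2 + a) * q) <= a * 3) by (apply Rmult_le_compat_l; nra). nra. }
  unfold m in *. lra.
Qed.

Lemma lambda_lower_near_zero (s a : R) : 0 < s < 1 ->
  0 < a <= (1 - Rpower (1 / 2) s) / 6 ->
  (1 - s) * (1 - Rpower (1 / 2) s) / 8 <= lambda s a 1.
Proof.
  intros Hs Ha.
  assert (HN1 := power_midpoint_gap s a Hs Ha).
  set (q := Rpower (1 / 2) s) in *.
  assert (Hq1 : q < 1) by apply Rpower_half_base_lt_1, Hs.
  assert (Hq0 : 0 < q) by apply Rpower_pos.
  assert (HN0 := power_midpoint_concave s a Hs ltac:(lra)).
  rewrite lambda_generic by lra. rewrite !Rpower_one_base.
  set (N0 := Rpower a s + 1 - 2 * Rpower ((a + 1) / 2) s) in *.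
  set (N1 := Rpower a (s + 1) + 1 - 2 * Rpower ((a + 1) / 2) (s + 1)) in *.
  replace ((s - 1) / (s + 1) * (N1 / N0)) with ((1 - s) * N1 / ((1 + s) * - N0))
    by (field; lra).
  assert (Hden : (1 + s) * - N0 > 0) by nra.
  apply (Rle_div_r _ _ _ Hden).
  assert (HmS : Rpower ((a + 1) / 2) s <= 1).
  { rewrite <- (Rpower_one_base s) at 2. apply Rle_Rpower_l; lra. }
  assert (- N0 <= 2) by (unfold N0; pose proof (Rpower_pos a s); lra).
  assert (HD4 : (1 + s) * - N0 <= 4) by nra.
  assert (HK : 0 <= (1 - s) * (1 - q) / 8) by (apply Rmult_le_pos; nra).
  assert ((1 - s) * ((1 - q) / 2) <= (1 - s) * N1) by (apply Rmult_le_compat_l; lra).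
  assert ((1 - s) * (1 - q) / 8 * ((1 + s) * - N0) <= (1 - s) * (1 - q) / 8 * 4)
    by (apply Rmult_le_compat_l; lra).
  lra.
Qed.

Lemma Lmean_exp_neg (M : R) : 0 < M -> Lmean (exp (- M)) 1 < 1 / M.
Proof.
  intros HM. unfold Lmean.
  destruct (Req_EM_T (exp (- M)) 1) as [E|_].
  - rewrite <- exp_0 in E. apply exp_inv in E. lra.
  - rewrite ln_1, ln_exp. replace (0 - - M) with M by ring.
    apply Rmult_lt_compat_r; [apply Rinv_0_lt_compat, HM|].
    pose proof (exp_pos (- M)). lra.
Qed.

Lemma lambda_above_Lmean (s : R) : 0 < s < 1 ->
  exists a, 0 < a < 1 /\ Lmean a 1 < lambda s a 1.
Proof.
  intros Hs. set (q := Rpower (1 / 2) s).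
  assert (Hq1 : q < 1) by apply Rpower_half_base_lt_1, Hs.
  set (c := (1 - s) * (1 - q) / 8).
  assert (Hc : 0 < c) by (unfold c; apply Rdiv_lt_0_compat; nra).
  set (M := 6 / (1 - q) + 1 / c).
  assert (HM1 : 0 < 6 / (1 - q)) by (apply Rdiv_lt_0_compat; lra).
  assert (HM2 : 0 < 1 / c) by (apply Rdiv_lt_0_compat; lra).
  assert (HM : 0 < M) by (unfold M; lra).
  assert (HexpM : M < exp M) by (pose proof (exp_ineq1 M ltac:(lra)); lra).
  exists (exp (- M)).
  assert (Ha : 0 < exp (- M) < 1)
    by (split; [apply exp_pos | rewrite <- exp_0; apply exp_increasing; lra]).
  split; [exact Ha|].
  apply Rlt_le_trans with (1 / M); [apply Lmean_exp_neg, HM|].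
  apply Rle_trans with c.
  - apply Rle_div_l; [exact HM|]. unfold M.
    replace (c * (6 / (1 - q) + 1 / c)) with (c * (6 / (1 - q)) + 1) by (field; lra).
    assert (0 < c * (6 / (1 - q))) by nra. lra.
  - apply lambda_lower_near_zero; [exact Hs|]. split; [apply exp_pos|].
    rewrite exp_Ropp. fold q.
    apply Rle_trans with (/ M); [apply Rinv_le_contravar; lra|].
    apply Rle_trans with (/ (6 / (1 - q))); [apply Rinv_le_contravar; unfold M; lra|].
    right. field. lra.
Qed.

Lemma Gmean_le_lambda (s a b : R) : -1/2 <= s -> 0 < a -> 0 < b ->
  Gmean a b <= lambda s a b.
Proof.
  intros Hs Ha Hb.
  apply Rle_trans with (lambda (-1/2) a b);
    [apply Gmean_le_lambda_half | apply lambda_monotone]; assumption.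
Qed.

Lemma lambda_le_Lmean (s a b : R) : s <= 0 -> 0 < a -> 0 < b ->
  lambda s a b <= Lmean a b.
Proof.
  intros Hs Ha Hb.
  apply Rle_trans with (lambda 0 a b);
    [apply lambda_monotone | apply lambda0_le_Lmean]; assumption.
Qed.

Theorem theorem3 :
  (forall s : R, -1/2 <= s <= 0 ->
     forall a b : R, 0 < a -> 0 < b ->
       Gmean a b <= lambda s a b /\ lambda s a b <= Lmean a b)
  /\
  (forall s : R,
     (forall a b : R, 0 < a -> 0 < b -> Gmean a b <= lambda s a b) <-> -1/2 <= s)
  /\
  (forall s : R,
     (forall a b : R, 0 < a -> 0 < b -> lambda s a b <= Lmean a b) <-> s <= 0).
Proof.
  split; [|split].
  - intros s Hs a b Ha Hb.
    split; [apply Gmean_le_lambda | apply lambda_le_Lmean]; tauto.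
  - intros s. split; [|intros Hs a b; apply Gmean_le_lambda, Hs].
    intros Hall. apply Rnot_lt_le. intros Hs.
    set (s0 := Rmax s (-3/4)).
    destruct (lambda_below_Gmean s0) as [a [Ha Hbelow]];
      [unfold s0; apply Rmax_case_strong; lra|].
    assert (Hmono := lambda_monotone s s0 a 1 (proj1 Ha) Rlt_0_1 (Rmax_l _ _)).
    specialize (Hall a 1 (proj1 Ha) Rlt_0_1). lra.
  - intros s. split; [|intros Hs a b; apply lambda_le_Lmean, Hs].
    intros Hall. apply Rnot_lt_le. intros Hs.
    set (s0 := Rmin s (1/2)).
    destruct (lambda_above_Lmean s0) as [a [Ha Habove]];
      [unfold s0; apply Rmin_case_strong; lra|].
    assert (Hmono := lambda_monotone s0 s a 1 (proj1 Ha) Rlt_0_1 (Rmin_l _ _)).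
    specialize (Hall a 1 (proj1 Ha) Rlt_0_1). lra.
Qed.
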